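(* Let $\mathcal{C}\subsetneq\mathbb{F}_2^n$ be a linear code that is $(\Delta,s)$-locally testable with respect to a $\Delta$-limited parity-check matrix $H$ of size $m\times n$ with $n/2\le m\le n$, and let $\mathbf{0}_t\subseteq\mathbb{F}_2^t$ be the zero code of length $t$. Then the code $\mathcal{C}':=\mathcal{C}\oplus\mathbf{0}_t\subseteq\mathbb{F}_2^{n+t}$ is $(\Delta,s')$-locally testable with respect to a $\Delta$-limited parity-check matrix, where $s':=\min(s/2,1)$.
   Context: A linear code $\mathcal{C}\subseteq\mathbb{F}_q^n$ is $(\Delta,s)$-locally testable with respect to a parity-check matrix $H\in\mathbb{F}_q^{m\times n}$ ($\ker H=\mathcal{C}$) if every row of $H$ has at most $\Delta$ nonzero entries and $\frac1m|Hx|\ge\frac sn d(x,\mathcal{C})$ for all $x\in\mathbb{F}_q^n$ ($|\cdot|$ Hamming weight, $d(x,\mathcal{C})$ Hamming distance to the code). A matrix is $\Delta$-limited if every row and column has at most $\Delta$ nonzero entries. $\mathcal{C}\oplus\mathbf{0}_t=\{(c,0):c\in\mathcal{C}\}$. *)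

From HB Require Import structures.
From mathcomp Require Import all_boot all_order all_algebra.
Set Implicit Arguments. Unset Strict Implicit. Unset Printing Implicit Defensive.
Import Order.TTheory GRing.Theory Num.Theory.
Local Open Scope ring_scope.

Definition wt (F : fieldType) (n : nat) (v : 'cV[F]_n) : nat :=
  #|[set i : 'I_n | v i ord0 != 0]|.

(* Hamming distance of x to a code C (C is assumed non-empty where used;
   the default value n is never smaller than an actual distance). *)
Definition dist_code (F : finFieldType) (n : nat) (C : {set 'cV[F]_n}) (x : 'cV[F]_n) : nat :=
  \big[minn/n]_(c in C) wt (x - c).

Definition row_wt (F : fieldType) m n (H : 'M[F]_(m, n)) (i : 'I_m) : nat :=
  #|[set j : 'I_n | H i j != 0]|.
Definition col_wt (F : fieldType) m n (H : 'M[F]_(m, n)) (j : 'I_n) : nat :=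
  #|[set i : 'I_m | H i j != 0]|.

Definition parity_check (F : finFieldType) m n (H : 'M[F]_(m, n)) (C : {set 'cV[F]_n}) : Prop :=
  forall x : 'cV[F]_n, (x \in C) = (H *m x == 0).

Definition limited (F : fieldType) m n (D : nat) (H : 'M[F]_(m, n)) : Prop :=
  (forall i, (row_wt H i <= D)%N) /\ (forall j, (col_wt H j <= D)%N).

Definition locally_testable (R : realFieldType) (F : finFieldType) m n
    (C : {set 'cV[F]_n}) (H : 'M[F]_(m, n)) (D : nat) (s : R) : Prop :=
  parity_check H C /\
  (forall i, (row_wt H i <= D)%N) /\
  (forall x : 'cV[F]_n,
      (wt (H *m x))%:R / m%:R >= s / n%:R * (dist_code C x)%:R).

Definition pad_zero (F : finFieldType) n t (C : {set 'cV[F]_n}) : {set 'cV[F]_(n + t)} :=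
  [set col_mx c (0 : 'cV[F]_t) | c in C].

(* Take H' = diag(H, 1_t).  A word (x, y) has syndrome (H x, y), and its
   distance to C (+) 0_t is at most d(x, C) + |y|.  The x-part is detected by
   H, but the normalisations s/n and 1/m become s'/(n+t) and 1/(m+t); because
   n <= 2m, halving s pays for this change.  The y-part is detected with rate
   1 >= s' by the identity block, because m <= n.  Finally the rows and columns
   of the identity block have weight 1 <= D, since C is proper and so H != 0. *)

From HB Require Import structures.
From mathcomp Require Import all_boot all_order all_algebra.
From mathcomp Require Import ring lra.
Import Order.TTheory GRing.Theory Num.Theory.
Set Implicit Arguments.
Unset Strict Implicit.
Unset Printing Implicit Defensive.
Local Open Scope ring_scope.

Section PaddedSoundness.
Variables (R : realFieldType) (m n t : R).
Hypotheses (m_gt0 : 0 < m) (m_le_n : m <= n) (n_le_2m : n <= 2 * m) (t_ge0 : 0 <= t).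

Let n_gt0 : 0 < n. Proof. exact: lt_le_trans m_le_n. Qed.
Let nt_gt0 : 0 < n + t. Proof. by rewrite ltr_wpDr. Qed.
Let mt_gt0 : 0 < m + t. Proof. by rewrite ltr_wpDr. Qed.

Lemma pad_soundness_le_code (s s' a d : R) : s' <= s / 2 ->
  0 <= a -> 0 <= d -> s / n * d <= a / m -> s' / (n + t) * d <= a / (m + t).
Proof.
move=> s'_le a_ge0 d_ge0 sound.
have shrink : n / 2 / (n + t) <= m / (m + t).
  rewrite ler_pdivrMr // mulrAC ler_pdivlMr //.
  have : n * t <= 2 * m * t by rewrite ler_wpM2r.
  have : 0 <= m * n by rewrite mulr_ge0 ?ltW.
  lra.
apply: (@le_trans _ _ (s / n * d * (n / 2 / (n + t)))).
  rewrite (_ : _ * (_ / _) = s / 2 / (n + t) * d); last by field; rewrite !gt_eqF.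
  by do 2!apply: ler_wpM2r => //; rewrite invr_ge0 ltW.
have n2t_ge0 : 0 <= n / 2 / (n + t) by rewrite !divr_ge0 ?ltW.
apply: le_trans (ler_wpM2r n2t_ge0 sound) _.
apply: le_trans (ler_wpM2l _ shrink) _; first by rewrite divr_ge0 // ltW.
by rewrite mulrA divfK ?gt_eqF.
Qed.

Lemma pad_soundness_le_padding (s' b : R) : s' <= 1 -> 0 <= b ->
  s' / (n + t) * b <= b / (m + t).
Proof.
move=> s'_le1 b_ge0; rewrite mulrC mulrA ler_pdivrMr // mulrAC ler_pdivlMr //.
rewrite mulrAC; apply: le_trans (ler_piMr _ s'_le1) _; first by rewrite mulr_ge0 // ltW.
by rewrite ler_wpM2l // lerD2r.
Qed.

Lemma pad_soundness_le (s s' a b d e : R) : s / n * d <= a / m -> e <= d + b ->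
  s' <= s / 2 -> s' <= 1 -> 0 <= a -> 0 <= b -> 0 <= d -> 0 <= e ->
  s' / (n + t) * e <= (a + b) / (m + t).
Proof.
move=> sound e_le s'_le s'_le1 a_ge0 b_ge0 d_ge0 e_ge0.
have [s'_le0|s'_gt0] := lerP s' 0.
  apply: le_trans (_ : 0 <= _); last by rewrite divr_ge0 ?addr_ge0 // ltW.
  apply: mulr_le0_ge0 => //; apply: mulr_le0_ge0 => //.
  by rewrite invr_ge0 ltW.
apply: le_trans (ler_wpM2l _ e_le) _; first by apply: divr_ge0; apply: ltW.
rewrite mulrDr mulrDl.
apply: lerD; last exact: pad_soundness_le_padding.
exact: pad_soundness_le_code s'_le a_ge0 d_ge0 sound.
Qed.
End PaddedSoundness.

Section Weights.
Variable F : fieldType.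

Lemma row_wtE m n (A : 'M[F]_(m, n)) i : row_wt A i = (\sum_(j < n) (A i j != 0%R))%N.
Proof. by rewrite /row_wt -sum1_card big_mkcond; apply: eq_bigr => j _; rewrite inE. Qed.

Lemma row_wt0 m n i : row_wt (0 : 'M[F]_(m, n)) i = 0%N.
Proof. by rewrite row_wtE big1 // => j _; rewrite mxE eqxx. Qed.

Lemma row_wt1 n i : row_wt (1%:M : 'M[F]_n) i = 1%N.
Proof.
rewrite /row_wt -(cards1 i); apply: eq_card => j.
by rewrite !inE mxE (eq_sym j); case: (i == j); rewrite ?oner_eq0 ?eqxx.
Qed.

Lemma row_wt_row_mx m n1 n2 (A : 'M[F]_(m, n1)) (B : 'M[F]_(m, n2)) i :
  row_wt (row_mx A B) i = (row_wt A i + row_wt B i)%N.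
Proof.
rewrite !row_wtE big_split_ord; congr (_ + _)%N; apply: eq_bigr => j _.
  by rewrite row_mxEl.
by rewrite row_mxEr.
Qed.

Lemma row_wt_col_mxu m1 m2 n (A : 'M[F]_(m1, n)) (B : 'M[F]_(m2, n)) i :
  row_wt (col_mx A B) (lshift m2 i) = row_wt A i.
Proof. by apply: eq_card => j; rewrite !inE col_mxEu. Qed.

Lemma row_wt_col_mxd m1 m2 n (A : 'M[F]_(m1, n)) (B : 'M[F]_(m2, n)) i :
  row_wt (col_mx A B) (rshift m1 i) = row_wt B i.
Proof. by apply: eq_card => j; rewrite !inE col_mxEd. Qed.

Lemma col_wt_tr m n (A : 'M[F]_(m, n)) j : col_wt A j = row_wt A^T j.
Proof. by apply: eq_card => i; rewrite !inE mxE. Qed.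

Lemma wt_tr n (v : 'cV[F]_n) : wt v = row_wt v^T ord0.
Proof. by apply: eq_card => i; rewrite !inE mxE. Qed.

Lemma wt_col_mx n1 n2 (u : 'cV[F]_n1) (v : 'cV[F]_n2) :
  wt (col_mx u v) = (wt u + wt v)%N.
Proof. by rewrite !wt_tr tr_col_mx row_wt_row_mx. Qed.

Lemma wt_le n (v : 'cV[F]_n) : (wt v <= n)%N.
Proof. by rewrite -[n in (_ <= n)%N]card_ord max_card. Qed.

Lemma row_wt_block_diag_le D m1 m2 n1 n2 (A : 'M[F]_(m1, n1)) (B : 'M[F]_(m2, n2)) :
  (forall i, row_wt A i <= D)%N -> (forall i, row_wt B i <= D)%N ->
  forall i, (row_wt (block_mx A 0 0 B) i <= D)%N.
Proof.
move=> rowA rowB i; rewrite block_mxEv.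
case: (split_ordP i) => k ->.
  by rewrite row_wt_col_mxu row_wt_row_mx row_wt0 addn0.
by rewrite row_wt_col_mxd row_wt_row_mx row_wt0 add0n.
Qed.

Lemma limited_block_diag D m1 m2 n1 n2 (A : 'M[F]_(m1, n1)) (B : 'M[F]_(m2, n2)) :
  limited D A -> limited D B -> limited D (block_mx A 0 0 B).
Proof.
move=> [rowA colA] [rowB colB]; split; first exact: row_wt_block_diag_le.
move=> j; rewrite col_wt_tr tr_block_mx !trmx0.
by apply: row_wt_block_diag_le => k; rewrite -col_wt_tr.
Qed.

Lemma limited1 D n : (0 < D)%N -> limited D (1%:M : 'M[F]_n).
Proof. by move=> D_gt0; split=> i; rewrite ?col_wt_tr ?trmx1 row_wt1. Qed.

Lemma row_wt_gt0 m n (A : 'M[F]_(m, n)) i j : A i j != 0 -> (0 < row_wt A i)%N.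
Proof. by move=> Aij; rewrite card_gt0; apply/set0Pn; exists j; rewrite inE. Qed.

End Weights.

Section PaddedCode.
Variable F : finFieldType.

Lemma parity_check_mem0 m n (H : 'M[F]_(m, n)) C : parity_check H C -> 0 \in C.
Proof. by move=> pcH; rewrite pcH mulmx0. Qed.

Lemma parity_check_neq0 m n (H : 'M[F]_(m, n)) C :
  parity_check H C -> C != setT -> H != 0.
Proof.
move=> pcH; apply: contraNneq => H0.
by apply/eqP/setP => x; rewrite inE pcH H0 mul0mx eqxx.
Qed.

Lemma mul_block_diag1_col m n t (H : 'M[F]_(m, n)) x (y : 'cV[F]_t) :
  block_mx H 0 0 1%:M *m col_mx x y = col_mx (H *m x) y.
Proof. by rewrite mul_block_col !mul0mx addr0 add0r mul1mx. Qed.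

Lemma parity_check_pad_zero m n t (H : 'M[F]_(m, n)) C :
  parity_check H C -> parity_check (block_mx H 0 0 1%:M) (pad_zero t C).
Proof.
move=> pcH z; rewrite -(vsubmxK z) mul_block_diag1_col col_mx_eq0.
apply/imsetP/andP => [[c cC /eq_col_mx [-> ->]] | [xC /eqP ->]].
  by rewrite -pcH cC eqxx.
by exists (usubmx z); rewrite ?pcH.
Qed.

Lemma dist_code_le n (C : {set 'cV[F]_n}) x c :
  c \in C -> (dist_code C x <= wt (x - c))%N.
Proof. by move=> Cc; rewrite /dist_code -minEnat -leEnat; apply: bigmin_le_cond. Qed.

Lemma dist_code_attained n (C : {set 'cV[F]_n}) x c0 : c0 \in C ->
  exists2 c, c \in C & dist_code C x = wt (x - c).
Proof.
move=> Cc0; rewrite /dist_code -minEnat.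
have [c Cc ->] :=
  eq_bigmin _ (mem C) (fun c => wt (x - c)) Cc0 (fun c _ => wt_le (x - c)).
by exists c.
Qed.

Lemma dist_code_pad_zero n t (C : {set 'cV[F]_n}) x (y : 'cV[F]_t) : C != set0 ->
  (dist_code (pad_zero t C) (col_mx x y) <= dist_code C x + wt y)%N.
Proof.
case/set0Pn => c0 /(dist_code_attained x) [c Cc ->].
have Cc' : col_mx c 0 \in pad_zero t C by apply/imsetP; exists c.
by rewrite (leq_trans (dist_code_le _ Cc')) // opp_col_mx add_col_mx subr0 wt_col_mx.
Qed.

Lemma locally_testable_pad_zero (R : realFieldType) m n t D (s : R)
    (H : 'M[F]_(m, n)) (C : {set 'cV[F]_n}) :
  (0 < D)%N -> (0 < m)%N -> (m <= n)%N -> (n <= 2 * m)%N ->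
  locally_testable C H D s ->
  locally_testable (pad_zero t C) (block_mx H 0 0 1%:M) D (Num.min (s / 2) 1).
Proof.
move=> D_gt0 m_gt0 m_le_n n_le_2m [pcH [rowH soundH]].
split; first exact: parity_check_pad_zero.
split; first by apply: row_wt_block_diag_le => // i; rewrite row_wt1.
have C_neq0 : C != set0 by apply/set0Pn; exists 0; exact: parity_check_mem0 pcH.
move=> z; rewrite -(vsubmxK z) mul_block_diag1_col wt_col_mx !natrD.
apply: (pad_soundness_le _ _ _ _ (soundH (usubmx z))).
all: rewrite ?ltr0n ?ler0n ?ler_nat ?ge_min ?lexx ?orbT //.
- by rewrite -natrM ler_nat.
- by rewrite -natrD ler_nat dist_code_pad_zero.
Qed.

End PaddedCode.

Theorem lemma13 (R : realFieldType) (n m t D : nat) (s : R)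
    (C : {set 'cV['F_2]_n}) (H : 'M['F_2]_(m, n)) :
  C != [set: 'cV['F_2]_n] ->
  locally_testable C H D s ->
  limited D H ->
  (n <= 2 * m)%N -> (m <= n)%N ->
  exists (m' : nat) (H' : 'M['F_2]_(m', n + t)),
    limited D H' /\
    locally_testable (pad_zero t C) H' D (Num.min (s / 2) 1).
Proof.
move=> C_proper testH limH n_le_2m m_le_n; have [pcH [rowH _]] := testH.
have /matrix0Pn [i [j Hij]] := parity_check_neq0 pcH C_proper.
have D_gt0 : (0 < D)%N := leq_trans (row_wt_gt0 Hij) (rowH i).
have m_gt0 : (0 < m)%N := leq_ltn_trans (leq0n i) (ltn_ord i).
exists (m + t)%N, (block_mx H 0 0 1%:M); split.
  exact: limited_block_diag limH (limited1 _ _ D_gt0).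
exact: locally_testable_pad_zero.
Qed.
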